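(* Let $W=q^{\Delta^2/2}\Gamma'_{-}(Qq^{-\rho})^{-1}\Gamma_{-}(q^{-\rho})^{-1}q^{-\Delta^2/2}$ and $L=W\Lambda W^{-1}$. Then $$L=(\Lambda-q^\Delta)(1+Qq^{\Delta-1}\Lambda^{-1})^{-1}=(1+Qq^{\Delta}\Lambda^{-1})^{-1}(\Lambda-q^\Delta),$$ where $(1+Qq^{\Delta-1}\Lambda^{-1})^{-1}=\sum_{n\ge0}(-Qq^{\Delta-1}\Lambda^{-1})^n$ and similarly for $(1+Qq^\Delta\Lambda^{-1})^{-1}$.
   Context: Let $0<|q|<1$, $0<|Q|<1$, with a fixed $q^{1/2}$. Work with $\mathbb{Z}\times\mathbb{Z}$ matrices; $\Delta=\sum_{i\in\mathbb{Z}}iE_{ii}$, $\Lambda=\sum_{i\in\mathbb{Z}}E_{i,i+1}$, $f(\Delta)=\sum_if(i)E_{ii}$ (e.g. $q^{\Delta}$, $q^{\Delta-1}$, $q^{\Delta^2/2}=\sum_iq^{i^2/2}E_{ii}$). For a parameter $a$, $\Gamma_{-}(aq^{-\rho})=\prod_{i\ge1}(1-aq^{i-1/2}\Lambda^{-1})^{-1}$ with $(1-x\Lambda^{-1})^{-1}=\sum_{n\ge0}x^n\Lambda^{-n}$, and $\Gamma'_{-}(aq^{-\rho})=\prod_{i\ge1}(1+aq^{i-1/2}\Lambda^{-1})$; $\Gamma_-(q^{-\rho})$ means $a=1$. Inverses are taken within lower triangular matrices. *)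

From HB Require Import structures.
From mathcomp Require Import all_boot all_order all_algebra.
From Stdlib Require Import ClassicalEpsilon.
Set Implicit Arguments.
Unset Strict Implicit.
Unset Printing Implicit Defensive.
Import Order.TTheory GRing.Theory Num.Theory.
Local Open Scope ring_scope.

Section ZMatrices.
Variable R : numFieldType.

Definition zmat := int -> int -> R.

Definition cvg (u : nat -> R) (l : R) : Prop :=
  forall eps : R, 0 < eps ->
    exists N : nat, forall n : nat, (N <= n)%N -> `|u n - l| < eps.

Definition lim (u : nat -> R) : R := epsilon (inhabits 0) (cvg u).

(* sum over k in Z, as limit of symmetric partial sums over [-N, N] *)
Definition zsum (f : int -> R) : R :=
  lim (fun N : nat => \sum_(k < (N.*2).+1) f (k%:Z - N%:Z)).

Definition zmul (A B : zmat) : zmat := fun i j => zsum (fun k => A i k * B k j).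
Definition zadd (A B : zmat) : zmat := fun i j => A i j + B i j.
Definition zsub (A B : zmat) : zmat := fun i j => A i j - B i j.
Definition zscale (c : R) (A : zmat) : zmat := fun i j => c * A i j.
Definition zone : zmat := fun i j => (i == j)%:R.

(* f(Delta) = sum_i f(i) E_ii *)
Definition zdiag (f : int -> R) : zmat := fun i j => if i == j then f i else 0.
(* Lambda = sum_i E_{i,i+1},  Lambda^{-1} = sum_i E_{i+1,i} *)
Definition Lam : zmat := fun i j => (j == i + 1)%:R.
Definition LamInv : zmat := fun i j => (i == j + 1)%:R.

Definition lower (A : zmat) : Prop := forall i j : int, i < j -> A i j = 0.

Definition zinv (A : zmat) : zmat :=
  epsilon (inhabits zone)
    (fun B => lower B /\ zmul A B = zone /\ zmul B A = zone).

Fixpoint zpow (A : zmat) (n : nat) : zmat :=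
  match n with 0%N => zone | n'.+1 => zmul (zpow A n') A end.

Definition zlim (A : nat -> zmat) : zmat := fun i j => lim (fun N => A N i j).

Definition zseries (A : nat -> zmat) : zmat :=
  zlim (fun N => fun i j => \sum_(n < N) A n i j).

Fixpoint zprodN (F : nat -> zmat) (N : nat) : zmat :=
  match N with 0%N => zone | N'.+1 => zmul (zprodN F N') (F N) end.

Definition zinfprod (F : nat -> zmat) : zmat := zlim (zprodN F).

(* Gamma_-(a q^{-rho}) = prod_{i>=1} (1 - a q^{i-1/2} Lambda^{-1})^{-1},
   with (1 - x Lambda^{-1})^{-1} = sum_{n>=0} x^n Lambda^{-n};
   here s = q^{1/2}, so q^{i-1/2} = s^(2i-1). *)
Definition Gamma_minus (s a : R) : zmat :=
  zinfprod (fun i => zseries (fun n =>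
     zscale ((a * s ^+ (i.*2).-1) ^+ n) (zpow LamInv n))).

(* Gamma'_-(a q^{-rho}) = prod_{i>=1} (1 + a q^{i-1/2} Lambda^{-1}) *)
Definition Gammap_minus (s a : R) : zmat :=
  zinfprod (fun i => zadd zone (zscale (a * s ^+ (i.*2).-1) LamInv)).

End ZMatrices.
Arguments Lam {R}.
Arguments LamInv {R}.
Arguments zone {R}.

From HB Require Import structures.
From mathcomp Require Import all_boot all_order all_algebra.
From mathcomp Require Import zify ring.
From Stdlib Require Import ClassicalEpsilon FunctionalExtensionality.
Set Implicit Arguments.
Unset Strict Implicit.
Unset Printing Implicit Defensive.
Import Order.TTheory GRing.Theory Num.Theory.
Local Open Scope ring_scope.

(* Every matrix in the theorem is, up to conjugation by the
   Gaussian weights q^{Delta^2/2} = s^{Delta^2}, a lower triangular Toeplitz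
   matrix, i.e. a formal power series c(x) in x = Lambda^-1:
     tmat e f c = sum_{i >= j} e(i) f(j) c(i - j) E_ij.
   Products of such matrices convolve the series, so the infinite products
   Gamma_- and Gamma'_- become the q-exponentials e(s x) = 1/(s x;q)_oo and
   E(Q s x) = (-Q s x;q)_oo (the partial products converge geometrically),
   and their inverses are e(-z) E(z) = 1.  Conjugating Lambda by W twists the
   series by x -> q x, which yields L = tmat((1 - s x)/(1 + Q s x)) Lambda.
   Finally (Lambda - q^Delta) T and T (Lambda - q^Delta) are computed for any
   weighted Toeplitz T, and the two geometric series of the statement are
   tmat(1/(1 + Q x/s)) and tmat(1/(1 + Q s x)); both products give L. *)

(* These are the only analytic facts the proof needs: every
   infinite sum or product below is eventually constant or converges
   geometrically, entry by entry. *)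
Section Limits.
Variable R : numFieldType.
Implicit Types (u v : nat -> R) (l : R).

Lemma cvg_unique u l1 l2 : cvg u l1 -> cvg u l2 -> l1 = l2.
Proof.
move=> h1 h2; apply/eqP; apply/negPn/negP => ne.
have e0 : 0 < `|l1 - l2| / 2 by rewrite divr_gt0 // normr_gt0 subr_eq0.
have [N1 HN1] := h1 _ e0; have [N2 HN2] := h2 _ e0.
have a1 := HN1 (maxn N1 N2) (leq_maxl _ _).
have a2 := HN2 (maxn N1 N2) (leq_maxr _ _).
have := ler_distD (u (maxn N1 N2)) l1 l2; rewrite (distrC l1 (u _)) => h.
by have := le_lt_trans h (ltrD a1 a2); rewrite -splitr ltxx.
Qed.

Lemma cvg_lim u l : cvg u l -> lim u = l.
Proof.
move=> h; apply: cvg_unique (h).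
exact: epsilon_spec (inhabits 0) (cvg u) (ex_intro _ l h).
Qed.

(* Eventually constant sequences converge; all our infinite sums of
   lower triangular matrices are of this kind entrywise. *)
Lemma cvg_eventually u l N0 : (forall n, (N0 <= n)%N -> u n = l) -> cvg u l.
Proof. by move=> h e e0; exists N0 => n hn; rewrite h // subrr normr0. Qed.

Lemma cvg_eq_eventually u v l N0 :
  (forall n, (N0 <= n)%N -> u n = v n) -> cvg v l -> cvg u l.
Proof.
move=> h hv e e0; have [N HN] := hv e e0; exists (maxn N0 N) => n hn.
rewrite h; last by apply: leq_trans hn; apply: leq_maxl.
by apply: HN; apply: leq_trans hn; apply: leq_maxr.
Qed.

Lemma cvg_shift u l m : cvg u l -> cvg (fun N => u (N - m)%N) l.
Proof. by move=> h e e0; have [N HN] := h e e0; exists (N + m)%N => n hn; apply: HN; lia. Qed.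

Lemma cvg_scale u l c : cvg u l -> cvg (fun N => c * u N) (c * l).
Proof.
move=> h e e0; have c1 : 0 < `|c| + 1 by rewrite ltr_wpDl.
have [N HN] := h (e / (`|c| + 1)) (divr_gt0 e0 c1); exists N => n hn.
rewrite -mulrBr normrM; apply: (le_lt_trans (y := (`|c| + 1) * `|u n - l|)).
  by rewrite ler_wpM2r // lerDl.
by rewrite mulrC -ltr_pdivlMr // HN.
Qed.

End Limits.

Section Geometric.
Variable R : archiNumFieldType.

Lemma bernoulli_ineq (t : R) n : 0 <= t -> n%:R * t <= (1 + t) ^+ n - 1.
Proof.
move=> t0; elim: n => [|n IH]; first by rewrite mul0r expr0 subrr.
have e : (1 + t) ^+ n.+1 - 1 = (1 + t) * ((1 + t) ^+ n - 1) + t.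
  by rewrite exprS; ring.
have h0 : 0 <= (1 + t) ^+ n - 1 by apply: le_trans (IH); rewrite mulr_ge0.
rewrite e -natr1 mulrDl mul1r lerD2r; apply: le_trans IH _.
by rewrite ler_peMl // lerDl.
Qed.

Lemma geometric_small (r K e : R) : 0 <= r -> r < 1 -> 0 < e -> 0 <= K ->
  exists N, forall n, (N <= n)%N -> K * r ^+ n < e.
Proof.
move=> r0 r1 e0 K0; have [->|rn0] := eqVneq r 0.
  by exists 1%N => -[|n] // _; rewrite expr0n mulr0.
have rp : 0 < r by rewrite lt_def rn0 r0.
set t := r^-1 - 1; have ht : 0 < t by rewrite subr_gt0 invf_gt1.
have hx : 0 <= K / (e * t) by rewrite divr_ge0 // ltW // mulr_gt0.
exists (Num.Def.archi_bound (K / (e * t))) => n hn.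
have hn' : K / (e * t) < n%:R.
  by apply: lt_le_trans (archi_boundP hx) _; rewrite ler_nat.
have Kn : K < e * (r^-1) ^+ n.
  move: hn'; rewrite ltr_pdivrMr ?mulr_gt0 // => /lt_le_trans; apply.
  rewrite mulrCA ler_pM2l // -[r^-1](subrK 1) addrC.
  by apply: le_trans (bernoulli_ineq _ (ltW ht)) _; rewrite gerBl.
by move: Kn; rewrite -(ltr_pM2r (exprn_gt0 n rp)) -mulrA -exprMn mulVf // expr1n mulr1.
Qed.

Lemma cvg_geometric (u : nat -> R) l (r K : R) : 0 <= r -> r < 1 -> 0 <= K ->
  (forall n, `|u n - l| <= K * r ^+ n) -> cvg u l.
Proof.
move=> r0 r1 K0 h e e0; have [N HN] := geometric_small r0 r1 e0 K0.
by exists N => n hn; apply: le_lt_trans (h n) (HN n hn).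
Qed.

Lemma prod_one_minus_near1 (y : nat -> R) n (B : R) : 0 <= B -> B <= 1 ->
  (forall k, (k < n)%N -> `|y k| <= B) ->
  `|\prod_(k < n) (1 - y k) - 1| <= 3 ^+ n * B.
Proof.
move=> B0 B1; elim: n => [|n IH] hy0; first by rewrite big_ord0 subrr normr0 mulr_ge0.
have hy : `|y n| <= B by apply: hy0.
have {}IH := IH (fun k hk => hy0 k (ltnW hk)).
rewrite big_ord_recr /=; set P := \prod_(_ < _) _.
have -> : P * (1 - y n) - 1 = (P - 1) * (1 - y n) - y n by ring.
apply: le_trans (ler_normB _ _) _; rewrite normrM.
have h1 : `|1 - y n| <= 2.
  by apply: le_trans (ler_normB _ _) _; rewrite normr1 -[2]/(1 + 1) lerD2l (le_trans hy).
have h2 : `|P - 1| * `|1 - y n| <= 3 ^+ n * B * 2.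
  by apply: ler_pM => //; rewrite mulr_ge0 // exprn_ge0.
apply: le_trans (lerD h2 hy) _.
have h3 : B <= 3 ^+ n * B by rewrite ler_peMl // exprn_ege1 // ler1n.
rewrite exprS (_ : 3 * 3 ^+ n * B = 3 ^+ n * B * 2 + 3 ^+ n * B); last by ring.
by rewrite lerD2l.
Qed.

End Geometric.

Section ZSum.
Variable R : numFieldType.

Lemma zsum_window (f : int -> R) (a : int) (n : nat) :
  (forall k, f k != 0 -> (a <= k) && (k < a + n%:Z)) ->
  zsum f = \sum_(t < n) f (a + t%:Z).
Proof.
move=> hf; rewrite /zsum; apply: cvg_lim.
apply: (cvg_eventually (N0 := (absz a + n)%N)) => M hM.
have ha1 : a <= (absz a)%:Z by rewrite abszE ler_norm.
have ha2 : - a <= (absz a)%:Z by rewrite abszE -normrN ler_norm.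
have hz k : ~~ ((a <= k) && (k < a + n%:Z)) -> f k = 0.
  by move=> hk; apply/eqP; apply: contraNT hk; apply: hf.
set p := absz (a + M%:Z); have hp : p%:Z = a + M%:Z by rewrite /p gez0_abs; lia.
rewrite -addnn -(big_mkord xpredT (fun k => f (k%:Z - M%:Z))); clearbody p.
rewrite (big_cat_nat (n := p)) /=; [|lia|lia].
rewrite [X in _ + X](big_cat_nat (n := (p + n)%N)) /=; [|lia|lia].
rewrite big1_seq ?add0r; last first.
  by move=> k /andP [_]; rewrite mem_index_iota => hk; apply: hz; apply/negP => /andP []; lia.
rewrite [X in _ + X]big1_seq ?addr0; last first.
  by move=> k /andP [_]; rewrite mem_index_iota => hk; apply: hz; apply/negP => /andP []; lia.
rewrite -{1}[p]add0n big_addn addnC addnK big_mkord.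
by apply: eq_bigr => i _; congr f; lia.
Qed.

Lemma zsum_single (f : int -> R) (a : int) :
  (forall k, k != a -> f k = 0) -> zsum f = f a.
Proof.
move=> h; rewrite (@zsum_window _ a 1) ?big_ord1 ?addr0 // => k.
by have [->|/h ->] := eqVneq k a; rewrite ?eqxx // lexx /= ltrDl.
Qed.

End ZSum.

(* Products of lower triangular Z x Z matrices are finite sums, hence
   associative; diagonal matrices and the shift Lambda act by reindexing,
   and a two-sided inverse within lower triangular matrices is unique. *)
Section Matrices.
Variable R : numFieldType.
Implicit Types (A B C : zmat R).

Lemma zmat_ext A B : (forall i j, A i j = B i j) -> A = B.
Proof. by move=> h; do 2![apply: functional_extensionality => ?]; apply: h. Qed.

Lemma zmul_window A B i j (a : int) (n : nat) : lower A -> lower B ->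
  a <= j -> i < a + n%:Z ->
  zmul A B i j = \sum_(t < n) A i (a + t%:Z) * B (a + t%:Z) j.
Proof.
move=> hA hB h1 h2; apply: zsum_window => k.
have [hk|hk] := leP k i; last by rewrite hA ?mul0r ?eqxx.
have [hk'|hk'] := leP j k; last by rewrite hB ?mulr0 ?eqxx.
by move=> _; apply/andP; split; lia.
Qed.

Lemma lower_zmul A B : lower A -> lower B -> lower (zmul A B).
Proof. by move=> hA hB i j hij; rewrite (@zmul_window _ _ _ _ j 0) ?big_ord0 ?addr0. Qed.

(* Associativity, valid because all the sums involved are finite. *)
Lemma zmulA_lower A B C : lower A -> lower B -> lower C ->
  zmul (zmul A B) C = zmul A (zmul B C).
Proof.
move=> hA hB hC; apply: zmat_ext => i j.
have [hij|hij] := ltP i j.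
  by rewrite (lower_zmul (lower_zmul hA hB) hC) // (lower_zmul hA (lower_zmul hB hC)).
pose n := absz (i - j + 1); have hn : i < j + n%:Z by rewrite /n gez0_abs; lia.
have hAB := lower_zmul hA hB; have hBC := lower_zmul hB hC.
rewrite (@zmul_window _ _ _ _ j n) // (@zmul_window _ _ _ _ j n) //.
rewrite (eq_bigr (fun l : 'I_n => \sum_(t < n)
    A i (j + t%:Z) * B (j + t%:Z) (j + l%:Z) * C (j + l%:Z) j)); last first.
  by move=> l _; rewrite (@zmul_window _ _ _ _ j n) ?big_distrl //; lia.
rewrite [RHS](eq_bigr (fun k : 'I_n => \sum_(t < n)
    A i (j + k%:Z) * (B (j + k%:Z) (j + t%:Z) * C (j + t%:Z) j))); last first.
  by move=> k _; have hk := ltn_ord k; rewrite (@zmul_window _ _ _ _ j n) ?big_distrr //; lia.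
by rewrite exchange_big /=; apply: eq_bigr => k _; apply: eq_bigr => l _; rewrite mulrA.
Qed.

Lemma zmul_diag_l (d : int -> R) A : zmul (zdiag d) A = fun i j => d i * A i j.
Proof.
apply: zmat_ext => i j; rewrite /zmul (@zsum_single _ _ i) /zdiag ?eqxx //.
by move=> k; rewrite eq_sym => /negbTE ->; rewrite mul0r.
Qed.

Lemma zmul_diag_r (d : int -> R) A : zmul A (zdiag d) = fun i j => A i j * d j.
Proof.
apply: zmat_ext => i j; rewrite /zmul (@zsum_single _ _ j) /zdiag ?eqxx //.
by move=> k /negbTE ->; rewrite mulr0.
Qed.

Lemma zone_diag : zone = zdiag (fun _ => 1 : R).
Proof. by apply: zmat_ext => i j; rewrite /zone /zdiag; case: eqP. Qed.

Lemma zmul1l A : zmul zone A = A.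
Proof. by rewrite zone_diag zmul_diag_l; apply: zmat_ext => i j; rewrite mul1r. Qed.

Lemma zmul1r A : zmul A zone = A.
Proof. by rewrite zone_diag zmul_diag_r; apply: zmat_ext => i j; rewrite mulr1. Qed.

Lemma zinv_unique A B : lower A -> lower B ->
  zmul A B = zone -> zmul B A = zone -> zinv A = B.
Proof.
move=> hA hB hAB hBA.
have [hB' [_ hB'A]] := epsilon_spec (inhabits zone)
  (fun B => lower B /\ zmul A B = zone /\ zmul B A = zone) (ex_intro _ B (conj hB (conj hAB hBA))).
rewrite /zinv; set B' := epsilon _ _ in hB' hB'A *.
by rewrite -[B']zmul1r -hAB -zmulA_lower // hB'A zmul1l.
Qed.

Lemma zmul_Lam_r A : zmul A Lam = fun i j => A i (j - 1).
Proof.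
apply: zmat_ext => i j; rewrite /zmul (@zsum_single _ _ (j - 1)) /Lam ?subrK ?eqxx ?mulr1 //.
move=> k hk; suff /negbTE -> : j != k + 1 by rewrite mulr0.
by apply: contra hk => /eqP ->; rewrite addrK.
Qed.

Lemma zmul_Lam_diag_l (d : int -> R) A i j :
  zmul (zsub Lam (zdiag d)) A i j = A (i + 1) j - d i * A i j.
Proof.
rewrite /zmul (@zsum_window _ _ i 2).
  rewrite big_ord_recr big_ord1 /= /zsub /Lam /zdiag addr0 eqxx.
  have -> : (i == i + 1) = false by apply/negbTE/eqP; lia.
  have -> : (i + 1%Z == i + 1) by apply/eqP.
  by rewrite subr0 mul1r sub0r mulNr addrC.
move=> k; case: (boolP ((i <= k) && (k < i + 2%:Z))) => // h; rewrite /zsub /Lam /zdiag.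
have -> : (k == i + 1) = false by apply/negbTE/eqP => e; move: h; rewrite e; lia.
have -> : (i == k) = false by apply/negbTE/eqP => e; move: h; rewrite e; lia.
by rewrite subrr mul0r eqxx.
Qed.

Lemma zmul_Lam_diag_r (d : int -> R) A i j :
  zmul A (zsub Lam (zdiag d)) i j = A i (j - 1) - A i j * d j.
Proof.
rewrite /zmul (@zsum_window _ _ (j - 1) 2).
  rewrite big_ord_recr big_ord1 /= /zsub /Lam /zdiag addr0.
  have -> : (j - 1 + 1%:Z) = j by ring.
  rewrite !eqxx; case: eqP => [e|_]; first by exfalso; lia.
  case: eqP => [e|_]; first by exfalso; lia.
  by rewrite subr0 mulr1 sub0r mulrN.
move=> k; case: (boolP ((j - 1 <= k) && (k < j - 1 + 2%:Z))) => // h; rewrite /zsub /Lam /zdiag.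
have -> : (j == k + 1) = false by apply/negbTE/eqP => e; move: h; rewrite e; lia.
have -> : (k == j) = false by apply/negbTE/eqP => e; move: h; rewrite e; lia.
by rewrite subrr mulr0 eqxx.
Qed.

End Matrices.

(* Coefficient sequences of formal power series in one variable x, with the
   Cauchy product conv.  Commutativity and associativity are inherited from
   polynomial multiplication through truncations. *)
Section Convolution.
Variable R : comNzRingType.
Implicit Types (a b d u : nat -> R).

Definition conv a b (n : nat) : R := \sum_(k < n.+1) a (n - k)%N * b k.

Definition monomial (x : R) (m : nat) : nat -> R := fun n => (n == m)%:R * x.

Definition lin1 (c : R) : nat -> R :=
  fun n => if n == 0%N then 1 else if n == 1%N then c else 0.

Definition geo (c : R) : nat -> R := fun n => c ^+ n.

Definition trunc (n : nat) u : {poly R} := \poly_(i < n.+1) u i.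

Lemma coef_trunc n u k : (k <= n)%N -> (trunc n u)`_k = u k.
Proof. by move=> hk; rewrite coef_poly ltnS hk. Qed.

Lemma conv_trunc n a b k : (k <= n)%N -> conv a b k = (trunc n a * trunc n b)`_k.
Proof.
move=> hk; rewrite coefMr; apply: eq_bigr => j _; have hj := ltn_ord j.
by rewrite !coef_trunc //; lia.
Qed.

Lemma coefM_upto n (p p' r r' : {poly R}) :
  (forall k, (k <= n)%N -> p`_k = p'`_k) -> (forall k, (k <= n)%N -> r`_k = r'`_k) ->
  forall k, (k <= n)%N -> (p * r)`_k = (p' * r')`_k.
Proof.
move=> hp hr k hk; rewrite !coefM; apply: eq_bigr => j _; have hj := ltn_ord j.
by rewrite hp ?hr //; lia.
Qed.

Lemma coef_trunc_conv n a b k : (k <= n)%N ->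
  (trunc n (conv a b))`_k = (trunc n a * trunc n b)`_k.
Proof. by move=> hk; rewrite coef_trunc // (conv_trunc _ _ hk). Qed.

Lemma convC a b : conv a b = conv b a.
Proof.
apply: functional_extensionality => n.
by rewrite (conv_trunc _ _ (leqnn n)) (conv_trunc _ _ (leqnn n)) mulrC.
Qed.

Lemma convA a b d : conv (conv a b) d = conv a (conv b d).
Proof.
apply: functional_extensionality => n.
rewrite (conv_trunc _ _ (leqnn n)) (conv_trunc _ _ (leqnn n)).
rewrite (coefM_upto (p' := trunc n a * trunc n b) (r' := trunc n d) (@coef_trunc_conv n a b)) //.
rewrite (coefM_upto (p' := trunc n a) (r' := trunc n b * trunc n d) _ (@coef_trunc_conv n b d)) //.
by rewrite mulrA.
Qed.

Lemma convCA a b d : conv a (conv b d) = conv b (conv a d).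
Proof. by rewrite -convA (convC a b) convA. Qed.

Lemma conv1l a : conv (monomial 1 0) a = a.
Proof.
apply: functional_extensionality => n; rewrite /conv big_ord_recr /= subnn.
rewrite big1 ?add0r /monomial ?eqxx ?mul1r // => i _; have hi := ltn_ord i.
have -> : (n - i == 0)%N = false by apply/negbTE; lia.
by rewrite /= !mul0r.
Qed.

Lemma conv1r a : conv a (monomial 1 0) = a.
Proof. by rewrite convC conv1l. Qed.

Lemma conv_lin1 c u n : conv (lin1 c) u n = if n is n'.+1 then u n + c * u n' else u 0%N.
Proof.
case: n => [|n]; first by rewrite /conv big_ord1 /lin1 /= mul1r.
rewrite /conv big_ord_recr big_ord_recr /= subnn /lin1 /= big1 ?add0r.
  by rewrite subSnn /= mul1r addrC.
move=> i _; have hi := ltn_ord i.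
have -> : (n.+1 - i == 0)%N = false by apply/negbTE; lia.
have -> : (n.+1 - i == 1)%N = false by apply/negbTE; lia.
by rewrite /= !mul0r.
Qed.

Lemma conv_lin1_geo c : conv (lin1 c) (geo (- c)) = monomial 1 0.
Proof.
apply: functional_extensionality => -[|n]; rewrite conv_lin1 /geo /monomial.
  by rewrite expr0 mulr1.
by rewrite exprS mulNr addrC subrr mulr1.
Qed.

Lemma conv_geoS u (x : R) n : conv u (geo x) n.+1 = u n.+1 + x * conv u (geo x) n.
Proof.
rewrite /conv big_ord_recl /= subn0 /geo expr0 mulr1; congr (_ + _).
by rewrite big_distrr /=; apply: eq_bigr => i _; rewrite subSS exprS /=; ring.
Qed.

Lemma conv_monomial x y n : conv (monomial x n) (monomial y 1) = monomial (x * y) n.+1.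
Proof.
apply: functional_extensionality => -[|m]; rewrite /conv /monomial.
  by rewrite big_ord1 /= !mul0r mulr0.
rewrite big_ord_recl big_ord_recl /= big1 ?addr0 => [|i _]; last by rewrite mul0r mulr0.
by rewrite !mul0r mulr0 add0r mul1r subn1 /= eqSS; ring.
Qed.

Definition twist (q : R) u : nat -> R := fun n => q ^+ n * u n.

Lemma twist_conv q a b : twist q (conv a b) = conv (twist q a) (twist q b).
Proof.
apply: functional_extensionality => n; rewrite /twist /conv big_distrr.
apply: eq_bigr => i _; have hi := ltn_ord i.
by rewrite /= mulrACA -exprD subnK // -ltnS.
Qed.

Lemma twist_lin1 x c : twist x (lin1 c) = lin1 (x * c).
Proof.
apply: functional_extensionality => n; rewrite /twist /lin1.
by case: n => [|[|n]] /=; rewrite ?expr0 ?mul1r ?expr1 ?mulr0.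
Qed.

Lemma twist_geo x c : twist x (geo c) = geo (x * c).
Proof. by apply: functional_extensionality => n; rewrite /twist /geo exprMn. Qed.

End Convolution.

(* When f and the next left weight are mutually
   inverse, multiplying such matrices convolves their coefficient sequences;
   all matrices of the theorem live in this algebra. *)
Section WeightedToeplitz.
Variable R : numFieldType.
Implicit Types (e f : int -> R) (c : nat -> R).

Definition tmat e f c : zmat R :=
  fun i j => if j <= i then e i * f j * c (absz (i - j)) else 0.

Lemma lower_tmat e f c : lower (tmat e f c).
Proof. by move=> i j h; rewrite /tmat leNgt h. Qed.

Lemma tmatE e f c (i j : int) (n : nat) : i - j = n%:Z -> tmat e f c i j = e i * f j * c n.
Proof. by move=> h; rewrite /tmat (_ : j <= i) ?h //; lia. Qed.

Lemma tmat_mul e f e' f' a b : (forall k, f k * e' k = 1) ->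
  zmul (tmat e f a) (tmat e' f' b) = tmat e f' (conv a b).
Proof.
move=> hfe; apply: zmat_ext => i j; have [hij|hij] := ltP i j.
  by rewrite (lower_zmul (lower_tmat e f a) (lower_tmat e' f' b) hij) lower_tmat.
pose m := absz (i - j); have hm : i - j = m%:Z by rewrite /m gez0_abs; lia.
rewrite (@zmul_window _ _ _ _ _ j m.+1 (lower_tmat _ _ _) (lower_tmat _ _ _)) //; last by lia.
rewrite (tmatE _ _ _ hm) /conv big_distrr /=; apply: eq_bigr => t _; have ht := ltn_ord t.
rewrite (@tmatE _ _ _ _ _ (m - t)%N) ?(@tmatE _ _ _ _ _ t); [|lia|lia].
transitivity (e i * f' j * (f (j + t%:Z) * e' (j + t%:Z)) * (a (m - t)%N * b t)); first by ring.
by rewrite hfe mulr1.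
Qed.

Lemma zone_tmat e f : (forall k, e k * f k = 1) -> zone = tmat e f (monomial 1 0).
Proof.
move=> h; apply: zmat_ext => i j; rewrite /zone /tmat /monomial.
have [->|ne] := eqVneq i j; first by rewrite lexx subrr /= !mulr1 h.
case: ifP => // _; have -> : (absz (i - j) == 0)%N = false by apply/negbTE; lia.
by rewrite !mul0r mulr0.
Qed.

Lemma LamInv_tmat : LamInv = tmat (fun _ => 1) (fun _ => 1) (monomial 1 1) :> zmat R.
Proof.
apply: zmat_ext => i j; rewrite /LamInv /tmat /monomial !mul1r mulr1.
case: ifP => hji; first by congr (_%:R); apply/eqP; case: eqP; lia.
by rewrite (_ : (i == j + 1) = false) //; apply/negbTE; lia.
Qed.

Lemma zdiag_tmat (d : int -> R) e f c :
  zmul (zdiag d) (tmat e f c) = tmat (fun i => d i * e i) f c.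
Proof. by rewrite zmul_diag_l; apply: zmat_ext => i j; rewrite /tmat; case: ifP; rewrite ?mulr0 ?mulrA. Qed.

Lemma tmat_zdiag (d : int -> R) e f c :
  zmul (tmat e f c) (zdiag d) = tmat e (fun j => f j * d j) c.
Proof.
rewrite zmul_diag_r; apply: zmat_ext => i j; rewrite /tmat.
by case: ifP => _; [ring | rewrite mul0r].
Qed.

Lemma zscale_tmat (x : R) e f c : zscale x (tmat e f c) = tmat e f (fun n => x * c n).
Proof. by apply: zmat_ext => i j; rewrite /zscale /tmat; case: ifP => _; [ring | rewrite mulr0]. Qed.

Lemma zadd_tmat e f a b : zadd (tmat e f a) (tmat e f b) = tmat e f (fun n => a n + b n).
Proof. by apply: zmat_ext => i j; rewrite /zadd /tmat; case: ifP => _; [ring | rewrite addr0]. Qed.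

Lemma zpow_tmat e f (x : R) n : (forall k, f k * e k = 1) ->
  zpow (tmat e f (monomial x 1)) n = tmat e f (monomial (x ^+ n) n).
Proof.
move=> hfe; elim: n => [|n IH] /=.
  rewrite (@zone_tmat e f); last by move=> k; rewrite mulrC.
  by congr tmat; apply: functional_extensionality => m; rewrite /monomial expr0.
by rewrite IH tmat_mul // conv_monomial exprS mulrC.
Qed.

(* A series of monomial-coefficient matrices is eventually constant entrywise. *)
Lemma zseries_tmat e f (x : nat -> R) :
  zseries (fun n => tmat e f (monomial (x n) n)) = tmat e f x.
Proof.
apply: zmat_ext => i j; apply: cvg_lim; rewrite /tmat; case: ifP => _; last first.
  by apply: (cvg_eventually (N0 := 0)) => N _; rewrite big1.
apply: (cvg_eventually (N0 := (absz (i - j)).+1)) => N hN.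
rewrite -big_distrr /= (bigD1 (Ordinal hN)) //= big1 ?addr0 /monomial ?eqxx ?mul1r // => k hk.
by rewrite (_ : (absz (i - j) == k) = false) ?mul0r //; apply: contraNF hk => /eqP hk; apply/eqP/val_inj.
Qed.

Lemma zseries_zpow_tmat e f (x : R) : (forall k, f k * e k = 1) ->
  zseries (fun n => zpow (tmat e f (monomial x 1)) n) = tmat e f (geo x).
Proof.
move=> hfe; rewrite -(zseries_tmat e f (geo x)); congr zseries.
by apply: functional_extensionality => n; rewrite zpow_tmat.
Qed.

Lemma zlim_tmat e f (a : nat -> nat -> R) (b : nat -> R) :
  (forall n, cvg (fun N => a N n) (b n)) -> zlim (fun N => tmat e f (a N)) = tmat e f b.
Proof.
move=> h; apply: zmat_ext => i j; apply: cvg_lim; rewrite /tmat.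
by case: ifP => _; [apply: cvg_scale | apply: (cvg_eventually (N0 := 0))].
Qed.

Lemma zprodN_tmat (F : nat -> zmat R) (a : nat -> nat -> R) :
  (forall N, F N.+1 = tmat (fun _ => 1) (fun _ => 1) (a N)) ->
  forall N, zprodN F N = tmat (fun _ => 1) (fun _ => 1)
     (nat_rect _ (monomial 1 0) (fun N u => conv u (a N)) N).
Proof.
move=> hF; elim => [|N IH] /=; first by rewrite (@zone_tmat (fun _ => 1) (fun _ => 1)) // => k; rewrite mulr1.
by rewrite IH hF tmat_mul // => k; rewrite mulr1.
Qed.

End WeightedToeplitz.

(* The two q-exponential series, with s a square root of q:
     e(z) = sum_n z^n / (q;q)_n            = 1 / (z;q)_oo,
     E(z) = sum_n q^(n(n-1)/2) z^n / (q;q)_n = (-z;q)_oo.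
   qexp_e b and qexp_E a are the coefficient sequences of e(b s x) and
   E(a s x).  Their q-difference equations e(qz) = (1 - z) e(z) and
   E(z) = (1 + z) E(qz) force e(-z) E(z) = 1.  From these we get the
   coefficient sequences wcoef, vcoef of the two mutually inverse Toeplitz
   parts of W and W^-1, and the key product wcoef * twist vcoef, which is
   the rational series (1 - s x) / (1 + Q s x). *)
Section QExponentials.
Variable R : numFieldType.
Variables (q s : R).
Hypothesis hs : s ^+ 2 = q.

Lemma s_sqS n : s ^+ (n.+1 * n.+1) = s ^+ (n * n) * q ^+ n * s.
Proof.
rewrite (_ : (n.+1 * n.+1 = n * n + 2 * n + 1)%N); last by lia.
by rewrite !exprD expr1 -hs -exprM mul2n -addnn exprD; ring.
Qed.

Hypothesis hq1 : `|q| < 1.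

Lemma one_sub_qpow_neq0 k : 1 - q ^+ k.+1 != 0.
Proof.
rewrite subr_eq0; apply/eqP => e.
have : `|q ^+ k.+1| < 1 by rewrite normrX exprn_ilt1.
by rewrite -e normr1 ltxx.
Qed.

Definition qpoch n : R := \prod_(k < n) (1 - q ^+ k.+1).

Lemma qpoch_neq0 n : qpoch n != 0.
Proof. by rewrite prodf_seq_neq0; apply/allP => k _; apply: one_sub_qpow_neq0. Qed.

Lemma qpochS n : qpoch n.+1 = qpoch n * (1 - q ^+ n.+1).
Proof. by rewrite /qpoch big_ord_recr. Qed.

Definition qexp_e (b : R) : nat -> R := fun n => (b * s) ^+ n / qpoch n.
Definition qexp_E (a : R) : nat -> R := fun n => a ^+ n * s ^+ (n * n) / qpoch n.

Lemma qexp_e_twist b : twist q (qexp_e b) = conv (lin1 (- (b * s))) (qexp_e b).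
Proof.
apply: functional_extensionality => n; rewrite conv_lin1 /twist.
case: n => [|n]; first by rewrite expr0 mul1r.
rewrite /qexp_e qpochS [(b * s) ^+ n.+1]exprS.
have h1 := qpoch_neq0 n; have h2 := one_sub_qpow_neq0 n.
move: h1 h2; set P := qpoch n; set y := q ^+ n.+1; set x := (b * s) ^+ n => h1 h2.
by field; rewrite h1 h2.
Qed.

Lemma qexp_E_twist a : qexp_E a = conv (lin1 (a * s)) (twist q (qexp_E a)).
Proof.
apply: functional_extensionality => n; rewrite conv_lin1 /twist.
case: n => [|n]; first by rewrite expr0 mul1r.
rewrite /qexp_E qpochS s_sqS [q ^+ n.+1]exprS [a ^+ n.+1]exprS.
have h1 := qpoch_neq0 n; have h2 := one_sub_qpow_neq0 n.
rewrite [q ^+ n.+1]exprS in h2.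
move: h1 h2; set P := qpoch n; set y := q ^+ n; set x := a ^+ n; set z := s ^+ (n * n).
by move=> h1 h2; field; rewrite h1 h2.
Qed.

(* e(-z) E(z) = 1: the product is fixed by x -> q x and starts with 1. *)
Lemma qexp_eE a : conv (qexp_e (- a)) (qexp_E a) = monomial 1 0.
Proof.
set p := conv _ _.
have tp : twist q p = p.
  by rewrite /p twist_conv qexp_e_twist mulNr opprK (convC (lin1 _)) convA -qexp_E_twist.
apply: functional_extensionality => -[|n].
  by rewrite /p /conv big_ord1 /qexp_e /qexp_E /qpoch /monomial big_ord0 /= !expr0 !divr1 !mul1r.
have := congr1 (fun f => f n.+1) tp; rewrite /twist /monomial /= mulr1 => e.
have : p n.+1 * (1 - q ^+ n.+1) = 0 by rewrite mulrBr mulr1 mulrC e subrr.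
by move/eqP; rewrite mulf_eq0 (negbTE (one_sub_qpow_neq0 n)) orbF => /eqP.
Qed.

Lemma qexp_Ee a : conv (qexp_E a) (qexp_e (- a)) = monomial 1 0.
Proof. by rewrite convC qexp_eE. Qed.

Variable Q : R.

(* the Toeplitz series of W = q^{D^2/2} Toep(wcoef) q^{-D^2/2} and of W^-1 *)
Definition wcoef := conv (qexp_e (- Q)) (qexp_E (-1)).
Definition vcoef := conv (qexp_E Q) (qexp_e 1).

Lemma wcoef_vcoef : conv wcoef vcoef = monomial 1 0.
Proof.
rewrite /wcoef /vcoef convA (convCA (qexp_E (-1))) -convA qexp_eE conv1l.
by have := qexp_Ee (-1); rewrite opprK.
Qed.

Lemma vcoef_wcoef : conv vcoef wcoef = monomial 1 0.
Proof. by rewrite convC wcoef_vcoef. Qed.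

Lemma wcoef_twist_vcoef : conv wcoef (twist q vcoef) = conv (lin1 (- s)) (geo (- (Q * s))).
Proof.
rewrite /wcoef /vcoef twist_conv convA (convCA (qexp_E (-1))).
have -> : conv (qexp_E (-1)) (twist q (qexp_e 1)) = lin1 (- s).
  rewrite qexp_e_twist convCA mul1r.
  by have := qexp_Ee (-1); rewrite opprK => ->; rewrite conv1r.
rewrite -convA convC; congr conv.
set y := conv (qexp_e (- Q)) (twist q (qexp_E Q)).
have hy : conv (lin1 (Q * s)) y = monomial 1 0 by rewrite /y convCA -qexp_E_twist qexp_eE.
by rewrite -[y]conv1l -(conv_lin1_geo (Q * s)) (convC (lin1 _)) convA hy conv1r.
Qed.

End QExponentials.

(* The i-th factor of
   Gamma_-(q^{-rho}) is the geometric series of s q^(i-1) Lambda^-1, and the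
   i-th factor of Gamma'_-(Q q^{-rho}) is 1 + Q s q^(i-1) Lambda^-1.  The
   N-th partial products have the explicit coefficients
     s^n (q^N;q)_n / (q;q)_n   and   Q^n s^(n^2) prod_(k<n) (1 - q^(N-k)) / (q;q)_n,
   which converge geometrically to qexp_e 1 and qexp_E Q as N grows. *)
Section VertexOperators.
Variable R : archiNumFieldType.
Variables (q s Q : R).
Hypothesis hs : s ^+ 2 = q.
Hypothesis hq1 : `|q| < 1.

Local Notation one := (fun _ : int => 1 : R).

Lemma tmat1_mul a b : zmul (tmat one one a) (tmat one one b) = tmat one one (conv a b).
Proof. by apply: tmat_mul => k; rewrite mulr1. Qed.

Lemma zone_tmat1 : zone = tmat one one (monomial 1 0).
Proof. by apply: zone_tmat => k; rewrite mulr1. Qed.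

Lemma zpow_LamInv n : zpow (LamInv : zmat R) n = tmat one one (monomial 1 n).
Proof. by rewrite LamInv_tmat zpow_tmat ?expr1n // => k; rewrite mulr1. Qed.

(* q^(i - 1/2) = s q^(i-1) for the i = N+1 -th factor. *)
Lemma s_pow_odd N : s ^+ (N.+1.*2).-1 = s * q ^+ N.
Proof. by rewrite doubleS /= exprS -hs -exprM -mul2n. Qed.

Lemma gamma_factor N :
  zseries (fun n => zscale ((1 * s ^+ (N.+1.*2).-1) ^+ n) (zpow LamInv n))
  = tmat one one (geo (s * q ^+ N)).
Proof.
rewrite -zseries_tmat; congr zseries; apply: functional_extensionality => n.
rewrite zpow_LamInv zscale_tmat s_pow_odd mul1r; congr tmat.
by apply: functional_extensionality => m; rewrite /monomial /geo; ring.
Qed.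

Lemma gammap_factor N :
  zadd zone (zscale (Q * s ^+ (N.+1.*2).-1) LamInv)
  = tmat one one (lin1 (Q * (s * q ^+ N))) :> zmat R.
Proof.
rewrite LamInv_tmat zscale_tmat zone_tmat1 zadd_tmat s_pow_odd.
by congr tmat; apply: functional_extensionality => -[|[|n]]; rewrite /monomial /lin1 /=; ring.
Qed.

Fixpoint gamma_coef (N : nat) : nat -> R :=
  if N is N'.+1 then conv (gamma_coef N') (geo (s * q ^+ N')) else monomial 1 0.

Definition qpoch_from (N n : nat) : R := \prod_(k < n) (1 - q ^+ (N + k)).

Lemma gamma_coefE N n : gamma_coef N n = s ^+ n * qpoch_from N n / qpoch q n.
Proof.
elim: N n => [|N IH] n /=.
  case: n => [|n]; first by rewrite /monomial /qpoch_from /qpoch !big_ord0 expr0 !mulr1 divr1.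
  by rewrite /monomial /qpoch_from big_ord_recl /= addn0 expr0 subrr !mul0r mulr0 mul0r.
elim: n => [|n IHn].
  by rewrite /conv big_ord1 /geo expr0 mulr1 IH /qpoch_from /qpoch !big_ord0 expr0 !mulr1 invr1.
rewrite conv_geoS IHn IH.
have e1 : qpoch_from N.+1 n.+1 = qpoch_from N.+1 n * (1 - q ^+ N * q ^+ n.+1).
  by rewrite /qpoch_from big_ord_recr /= -exprD addSnnS.
have e2 : qpoch_from N n.+1 = (1 - q ^+ N) * qpoch_from N.+1 n.
  by rewrite /qpoch_from big_ord_recl /= addn0; congr (_ * _); apply: eq_bigr => i _; rewrite addnS.
rewrite e1 e2 qpochS exprS.
have h1 := qpoch_neq0 hq1 n; have h2 := one_sub_qpow_neq0 hq1 n.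
move: h1 h2; set P := qpoch q n; set C := qpoch_from N.+1 n; set y := q ^+ n.+1 => h1 h2.
by field; rewrite h1 h2.
Qed.

Lemma qpoch_from_cvg n : cvg (fun N => qpoch_from N n) 1.
Proof.
apply: (@cvg_geometric _ _ _ `|q| (3 ^+ n)) => //; first by rewrite exprn_ge0.
move=> N; apply: (prod_one_minus_near1 (y := fun k => q ^+ (N + k))).
- by rewrite exprn_ge0.
- by rewrite exprn_ile1 // ltW.
- by move=> k _; rewrite normrX exprD ler_piMr ?exprn_ge0 // exprn_ile1 // ltW.
Qed.

Lemma Gamma_minus_tmat : Gamma_minus s 1 = tmat one one (qexp_e q s 1).
Proof.
rewrite /Gamma_minus /zinfprod.
rewrite (_ : zprodN _ = fun N => tmat one one (gamma_coef N)); last first.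
  apply: functional_extensionality => N.
  rewrite (@zprodN_tmat _ _ (fun N => geo (s * q ^+ N))) => [|M]; last exact: gamma_factor.
  by congr tmat; elim: N => [|N IH] //=; rewrite IH.
apply: zlim_tmat => n; rewrite (_ : qexp_e q s 1 n = s ^+ n / qpoch q n * 1); last first.
  by rewrite /qexp_e mul1r mulr1.
apply: (@cvg_eq_eventually _ _ (fun N => s ^+ n / qpoch q n * qpoch_from N n) _ 0).
  by move=> N _; rewrite gamma_coefE; ring.
exact/cvg_scale/qpoch_from_cvg.
Qed.

Fixpoint gammap_coef (N : nat) : nat -> R :=
  if N is N'.+1 then conv (gammap_coef N') (lin1 (Q * (s * q ^+ N'))) else monomial 1 0.

Definition qpoch_down (N n : nat) : R := \prod_(k < n) (1 - q ^+ (N - k)).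

Lemma qpoch_down0 N n : (N < n)%N -> qpoch_down N n = 0.
Proof. by move=> hN; rewrite /qpoch_down (bigD1 (Ordinal hN)) //= subnn expr0 subrr mul0r. Qed.

Lemma gammap_coefE N n :
  gammap_coef N n = Q ^+ n * s ^+ (n * n) * qpoch_down N n / qpoch q n.
Proof.
elim: N n => [|N IH] n /=.
  case: n => [|n]; first by rewrite /monomial /qpoch_down /qpoch !big_ord0 !expr0 !mulr1 divr1.
  by rewrite /monomial qpoch_down0 // !mul0r mulr0 mul0r.
rewrite convC conv_lin1; case: n => [|n]; first by rewrite IH /qpoch_down !big_ord0.
rewrite !IH.
have e1 : qpoch_down N.+1 n.+1 = (1 - q ^+ N.+1) * qpoch_down N n.
  by rewrite /qpoch_down big_ord_recl /= subn0; congr (_ * _); apply: eq_bigr.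
have e2 : qpoch_down N n.+1 = qpoch_down N n * (1 - q ^+ (N - n)).
  by rewrite /qpoch_down big_ord_recr.
rewrite e1 e2 qpochS (s_sqS hs) (exprS Q n).
have [hn|hn] := leqP n N; last by rewrite qpoch_down0 //; ring.
have h1 := qpoch_neq0 hq1 n; have h2 := one_sub_qpow_neq0 hq1 n.
have e3 : q ^+ N = q ^+ (N - n) * q ^+ n by rewrite -exprD subnK.
rewrite [q ^+ N.+1]exprS e3 [q ^+ n.+1]exprS; rewrite [q ^+ n.+1]exprS in h2.
move: h1 h2; set P := qpoch q n; set D := qpoch_down N n; set y := q ^+ n.
by set z := q ^+ (N - n) => h1 h2; field; rewrite h1 h2.
Qed.

Lemma qpoch_down_cvg n : cvg (fun N => qpoch_down N n) 1.
Proof.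
apply: (@cvg_eq_eventually _ _ (fun N => qpoch_down (N - n + n) n) _ n).
  by move=> N hN; rewrite subnK.
apply: (cvg_shift (u := fun M => qpoch_down (M + n) n)).
apply: (@cvg_geometric _ _ _ `|q| (3 ^+ n)) => //; first by rewrite exprn_ge0.
move=> M; apply: (prod_one_minus_near1 (y := fun k => q ^+ ((M + n) - k))).
- by rewrite exprn_ge0.
- by rewrite exprn_ile1 // ltW.
- move=> k hk; rewrite normrX -addnBA ?(ltnW hk) //.
  by rewrite exprD ler_piMr ?exprn_ge0 // exprn_ile1 // ltW.
Qed.

Lemma Gammap_minus_tmat : Gammap_minus s Q = tmat one one (qexp_E q s Q).
Proof.
rewrite /Gammap_minus /zinfprod.
rewrite (_ : zprodN _ = fun N => tmat one one (gammap_coef N)); last first.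
  apply: functional_extensionality => N.
  rewrite (@zprodN_tmat _ _ (fun N => lin1 (Q * (s * q ^+ N)))) => [|M]; last exact: gammap_factor.
  by congr tmat; elim: N => [|N IH] //=; rewrite IH.
apply: zlim_tmat => n; rewrite (_ : qexp_E q s Q n = Q ^+ n * s ^+ (n * n) / qpoch q n * 1); last first.
  by rewrite /qexp_E mulr1.
apply: (@cvg_eq_eventually _ _ (fun N => Q ^+ n * s ^+ (n * n) / qpoch q n * qpoch_down N n) _ 0).
  by move=> N _; rewrite gammap_coefE; ring.
exact/cvg_scale/qpoch_down_cvg.
Qed.

(* The lower triangular inverses, by e(-z) E(z) = 1. *)
Lemma Gamma_minus_inv : zinv (Gamma_minus s 1) = tmat one one (qexp_E q s (-1)).
Proof.
have eE := qexp_eE hs hq1 (-1); have Ee := qexp_Ee hs hq1 (-1); rewrite opprK in eE Ee.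
rewrite Gamma_minus_tmat; apply: zinv_unique; try exact: lower_tmat.
  by rewrite tmat1_mul eE -zone_tmat1.
by rewrite tmat1_mul Ee -zone_tmat1.
Qed.

Lemma Gammap_minus_inv : zinv (Gammap_minus s Q) = tmat one one (qexp_e q s (- Q)).
Proof.
rewrite Gammap_minus_tmat; apply: zinv_unique; try exact: lower_tmat.
  by rewrite tmat1_mul (qexp_Ee hs hq1) -zone_tmat1.
by rewrite tmat1_mul (qexp_eE hs hq1) -zone_tmat1.
Qed.

End VertexOperators.

(* With sqpow i = s^(i^2) = q^(i^2/2), the
   matrices q^{Delta^2/2} T q^{-Delta^2/2} with T Toeplitz are the weighted
   Toeplitz matrices tmat sqpow sqpowN c.  Moving Lambda or q^Delta across
   the weights only rescales coefficients by powers of s. *)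
Section SquareWeights.
Variable R : numFieldType.
Variables (q s : R).
Hypothesis hs : s ^+ 2 = q.
Hypothesis hs0 : s != 0.

Definition sqpow (i : int) : R := s ^ (i * i).
Definition sqpowN (i : int) : R := s ^ (- (i * i)).

Local Notation T := (tmat sqpow sqpowN).

Lemma spowD (a b c : int) : a + b = c -> s ^ a * s ^ b = s ^ c.
Proof. by move=> <-; rewrite expfzDr. Qed.

Lemma sqpowNK k : sqpowN k * sqpow k = 1.
Proof. by rewrite /sqpowN /sqpow (@spowD _ _ 0) ?expr0z // addNr. Qed.

Lemma sqpowKN k : sqpow k * sqpowN k = 1.
Proof. by rewrite mulrC sqpowNK. Qed.

Lemma sqpowS i : sqpow (i + 1) = sqpow i * s ^ (2 * i + 1).
Proof. by rewrite /sqpow (spowD (c := (i + 1) * (i + 1))) //; ring. Qed.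

Lemma sqpowN_pred j : sqpowN (j - 1) = sqpowN j * s ^ (2 * j - 1).
Proof. by rewrite /sqpowN (spowD (c := - ((j - 1) * (j - 1)))) //; ring. Qed.

Lemma qpowz (i : int) : q ^ i = s ^ (2 * i).
Proof. by rewrite -hs -exprz_exp. Qed.

Lemma spow_addn (a : int) (n : nat) : s ^ (a + n%:Z) = s ^ a * s ^+ n.
Proof. by rewrite expfzDr. Qed.

Lemma tmat_Lam_entry c (i j : int) (m : nat) : i + 1 - j = m%:Z ->
  zmul (T c) Lam i j = sqpow i * sqpowN j * s ^ (2 * j - 1) * c m.
Proof. by move=> h; rewrite zmul_Lam_r (tmatE _ _ _ (_ : _ = m%:Z)) ?sqpowN_pred; [ring | lia]. Qed.

Lemma tmat_Lam_zero c (i j : int) : i + 1 < j -> zmul (T c) Lam i j = 0.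
Proof. by move=> h; rewrite zmul_Lam_r lower_tmat //; lia. Qed.

(* W Lambda W^-1 for W = T w, W^-1 = T v: moving Lambda past the weights
   twists v by x -> q x. *)
Lemma tmat_conj_Lam w v : zmul (zmul (T w) Lam) (T v) = zmul (T (conv w (twist q v))) Lam.
Proof.
apply: zmat_ext => i j; rewrite {1}zmul_Lam_r.
have [hij|hij] := ltP (i + 1) j.
  rewrite tmat_Lam_zero // /zmul (@zsum_window _ _ j 0) ?big_ord0 // => k.
  rewrite /tmat; case: ifP => h1; last by rewrite mul0r eqxx.
  by case: ifP => h2; [move: hij h1 h2; lia | rewrite mulr0 eqxx].
set m := absz (i + 1 - j)%R; have hm : i + 1 - j = m%:Z by rewrite /m gez0_abs; lia.
rewrite (tmat_Lam_entry _ hm) /zmul (@zsum_window _ _ j m.+1); last first.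
  move=> k; rewrite /tmat; case: ifP => h1; last by rewrite mul0r eqxx.
  by case: ifP => h2; [move=> _; apply/andP; split; lia | rewrite mulr0 eqxx].
rewrite /conv !big_distrr /=; apply: eq_bigr => t _; have ht := ltn_ord t.
rewrite (@tmatE _ _ _ _ _ _ (m - t)%N) ?(@tmatE _ _ _ _ _ _ t) /twist; [|lia|lia].
have hw : sqpowN (j + t%:Z - 1) * sqpow (j + t%:Z) = s ^ (2 * j - 1) * q ^+ t.
  rewrite -hs -exprM /sqpowN /sqpow -spow_addn (spowD (c := 2 * j - 1 + (2 * t)%N%:Z)) //.
  by rewrite PoszM; ring.
transitivity (sqpow i * sqpowN j * (sqpowN (j + t%:Z - 1) * sqpow (j + t%:Z))
  * (w (m - t)%N * v t)); first by ring.
by rewrite hw; ring.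
Qed.

Lemma Lam_sub_qpow_tmat g :
  zmul (zsub Lam (zdiag (fun i => q ^ i))) (T g)
  = zmul (T (twist s (conv (lin1 (-1)) (twist s g)))) Lam.
Proof.
apply: zmat_ext => i j; rewrite zmul_Lam_diag_l.
have [hij|hij] := ltP (i + 1) j.
  by rewrite tmat_Lam_zero // !lower_tmat ?mulr0 ?subr0 //; lia.
set m := absz (i + 1 - j)%R; have hm : i + 1 - j = m%:Z by rewrite /m gez0_abs; lia.
rewrite (tmat_Lam_entry _ hm) (tmatE _ _ _ (_ : _ = m%:Z)); last by lia.
rewrite /twist conv_lin1; case: m hm => [|n] hm.
  rewrite (_ : j = i + 1) ?lower_tmat ?ltrDl // ?mulr0 ?subr0; last by lia.
  have -> : sqpow i * sqpowN (i + 1) * s ^ (2 * (i + 1) - 1) = 1.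
    by rewrite -mulrA -sqpowN_pred addrK sqpowKN.
  by rewrite sqpowKN !expr0 !mul1r.
rewrite (tmatE _ _ _ (_ : _ = n%:Z)) ?sqpowS ?qpowz; last by lia.
have -> : 2 * i + 1 = 2 * j - 1 + (n.*2.+2)%N%:Z by rewrite -addnn; lia.
have -> : 2 * i = 2 * j - 1 + (n.*2.+1)%N%:Z by rewrite -addnn; lia.
by rewrite !spow_addn -!addnn !exprS !exprD; ring.
Qed.

Lemma tmat_Lam_sub_qpow g :
  zmul (T g) (zsub Lam (zdiag (fun i => q ^ i)))
  = zmul (T (conv (lin1 (- s)) g)) Lam.
Proof.
apply: zmat_ext => i j; rewrite zmul_Lam_diag_r.
have [hij|hij] := ltP (i + 1) j.
  by rewrite tmat_Lam_zero // !lower_tmat ?mul0r ?subr0 //; lia.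
set m := absz (i + 1 - j)%R; have hm : i + 1 - j = m%:Z by rewrite /m gez0_abs; lia.
rewrite (tmat_Lam_entry _ hm) (tmatE _ _ _ (_ : _ = m%:Z)) ?sqpowN_pred; last by lia.
rewrite conv_lin1; case: m hm => [|n] hm.
  by rewrite lower_tmat ?mul0r ?subr0; [ring | lia].
rewrite (tmatE _ _ _ (_ : _ = n%:Z)) ?qpowz; last by lia.
rewrite -(spowD (a := 2 * j - 1) (b := 1) (c := 2 * j)) ?expr1z; last by ring.
by ring.
Qed.

Lemma diag_LamInv_tmat (c : R) (d : int -> R) x :
  (forall j, c * d (j + 1) = sqpow (j + 1) * sqpowN j * x) ->
  zscale c (zmul (zdiag d) LamInv) = T (monomial x 1).
Proof.
move=> hd; rewrite zmul_diag_l; apply: zmat_ext => i j.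
rewrite /zscale /LamInv /tmat /monomial; have [->|ne] := eqVneq i (j + 1).
  rewrite lerDl ler01 (_ : absz (j + 1 - j)%R = 1%N) /=; last by lia.
  by rewrite mulr1 mul1r hd.
rewrite mulr0 mulr0; case: ifP => // hji.
have -> : (absz (i - j)%R == 1)%N = false by apply/negbTE/eqP => h; apply/eqP: ne; lia.
by rewrite mul0r mulr0.
Qed.

End SquareWeights.

Section LaxOperator.
Variable R : archiNumFieldType.
Variables (q s Q : R).
Hypothesis hs : s ^+ 2 = q.
Hypothesis hq1 : `|q| < 1.
Hypothesis hs0 : s != 0.

Local Notation T := (tmat (sqpow s) (sqpowN s)).

Lemma dressing_tmat :
  zmul (zmul (zmul (zdiag (fun i : int => s ^ (i * i))) (zinv (Gammap_minus s Q)))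
             (zinv (Gamma_minus s 1))) (zdiag (fun i : int => s ^ (- (i * i))))
  = T (wcoef q s Q).
Proof.
rewrite (Gammap_minus_inv Q hs hq1) (Gamma_minus_inv hs hq1) zdiag_tmat.
rewrite (tmat_mul _ _ _ _ (fun _ => mulr1 (1 : R))) tmat_zdiag.
by congr tmat; apply: functional_extensionality => i; rewrite ?mulr1 ?mul1r.
Qed.

Lemma dressing_inv : zinv (T (wcoef q s Q)) = T (vcoef q s Q).
Proof.
apply: zinv_unique; try exact: lower_tmat.
  by rewrite (tmat_mul _ _ _ _ (sqpowNK hs0)) (wcoef_vcoef hs hq1) -(zone_tmat (sqpowKN hs0)).
by rewrite (tmat_mul _ _ _ _ (sqpowNK hs0)) (vcoef_wcoef hs hq1) -(zone_tmat (sqpowKN hs0)).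
Qed.

Lemma lax_tmat : zmul (zmul (T (wcoef q s Q)) Lam) (zinv (T (wcoef q s Q)))
  = zmul (T (conv (lin1 (- s)) (geo (- (Q * s))))) Lam.
Proof. by rewrite dressing_inv (tmat_conj_Lam hs hs0) (wcoef_twist_vcoef hs hq1). Qed.

Lemma series_qpow_pred :
  zseries (fun n => zpow (zscale (- Q) (zmul (zdiag (fun i : int => q ^ (i - 1))) LamInv)) n)
  = T (geo (- Q / s)).
Proof.
rewrite (diag_LamInv_tmat hs0 (x := - Q / s)) ?zseries_zpow_tmat // => [|j].
  exact: sqpowNK.
rewrite addrK (sqpowS hs0) (qpowz hs) -(spowD hs0 (a := 2 * j) (b := 1) (c := 2 * j + 1)) // expr1z.
rewrite -[LHS]mul1r -(sqpowKN hs0 j); field.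
by rewrite hs0.
Qed.

Lemma series_qpow :
  zseries (fun n => zpow (zscale (- Q) (zmul (zdiag (fun i : int => q ^ i)) LamInv)) n)
  = T (geo (- (Q * s))).
Proof.
rewrite (diag_LamInv_tmat hs0 (x := - (Q * s))) ?zseries_zpow_tmat // => [|j].
  exact: sqpowNK.
rewrite (sqpowS hs0) (qpowz hs) -(spowD hs0 (a := 2 * j + 1) (b := 1) (c := 2 * (j + 1))); last by ring.
by rewrite expr1z -[LHS]mul1r -(sqpowKN hs0 j); ring.
Qed.

Lemma lowering_coef :
  twist s (conv (lin1 (-1)) (twist s (geo (- Q / s)))) = conv (lin1 (- s)) (geo (- (Q * s))).
Proof.
rewrite twist_geo twist_conv twist_lin1 twist_geo mulrN1.
by congr (conv _ (geo _)); field.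
Qed.

End LaxOperator.

Theorem mainTheorem6 (R : archiClosedFieldType) (q Q s : R)
  (hq0 : 0 < `|q|) (hq1 : `|q| < 1) (hQ0 : 0 < `|Q|) (hQ1 : `|Q| < 1)
  (hs : s ^+ 2 = q) :
  let D := zdiag (fun i : int => s ^ (i * i)) in            (* q^{Delta^2/2} *)
  let Dm := zdiag (fun i : int => s ^ (- (i * i))) in       (* q^{-Delta^2/2} *)
  let W := zmul (zmul (zmul D (zinv (Gammap_minus s Q)))
                      (zinv (Gamma_minus s 1))) Dm in
  let L := zmul (zmul W Lam) (zinv W) in
  let qD := zdiag (fun i : int => q ^ i) in                 (* q^Delta *)
  let qDm1 := zdiag (fun i : int => q ^ (i - 1)) in         (* q^{Delta-1} *)
  L = zmul (zsub Lam qD)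
           (zseries (fun n => zpow (zscale (- Q) (zmul qDm1 LamInv)) n))
  /\
  L = zmul (zseries (fun n => zpow (zscale (- Q) (zmul qD LamInv)) n))
           (zsub Lam qD).
Proof.
move=> D Dm W L qD qDm1.
have hs0 : s != 0 by apply: contraTneq hq0 => s0; rewrite -hs s0 expr0n normr0 ltxx.
have hL : L = zmul (tmat (sqpow s) (sqpowN s) (conv (lin1 (- s)) (geo (- (Q * s))))) Lam.
  by rewrite /L /W /D /Dm (dressing_tmat Q hs hq1) (lax_tmat Q hs hq1 hs0).
split.
- by rewrite hL /qDm1 (series_qpow_pred Q hs hs0) (Lam_sub_qpow_tmat hs hs0) lowering_coef.
- by rewrite hL /qD (series_qpow Q hs hs0) (tmat_Lam_sub_qpow hs hs0).
Qed.
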